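(* Let $H(q,p)=\tfrac12\langle B(q)p,p\rangle+V(q)$ on $T^*\mathbb T^2$, $\mathbb T^2=(\mathbb R/2\pi\mathbb Z)^2$, with $B,V$ smooth and $2\pi$-periodic in $q_1,q_2$, $B$ symmetric positive definite, $V$ with a nondegenerate maximum at $q=0$, $V(0)=0$, and $\frac{\partial B}{\partial q_2}(q_1,0)=0$. Let $\gamma$ be a homoclinic orbit to $O=(0,0,0,0)$ contained (in the covering coordinates) in $\{q_2=0\}$ with $q_1$ increasing from $0$ to $2\pi$, given by $p_1=P_1(q_1)$, $p_2=P_2(q_1)$, $q_1\in(0,2\pi)$. Assume: for some $a>0,\delta>0$, the unstable manifold of $O$ is the graph $p=\nabla S^u(q)$ on $(-a,\pi+a)\times(-\delta,\delta)$ and the stable manifold of $O$ is the graph $p=\nabla S^s(q)$ on $(-\pi-a,a)\times(-\delta,\delta)$, with $S^u(0,0)=S^s(0,0)=0$. Let $\sigma=\int_0^{2\pi}P_1(q_1)\,dq_1$ and $\widehat S^s(q_1,q_2)=S^s(q_1-2\pi,q_2)+\sigma$ on $(\pi-a,2\pi+a)\times(-\delta,\delta)$. Let $S_0',S_1:\mathbb R\to\mathbb R$ be the $2\pi$-antiperiodic extensions of $P_1,P_2$ (i.e. $f(q_1+2\pi)=-f(q_1)$), and $S_0$ the primitive of $S_0'$ with $S_0(0)=0$. Let $T^u(q_1)=\frac{\partial^2S^u}{\partial q_2^2}(q_1,0)$ and $\widehat T^s(q_1)=\frac{\partial^2\widehat S^s}{\partial q_2^2}(q_1,0)$. If $H$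 is $\mathcal R$-reversible with respect to $\mathcal R(q,p)=(Rq,-Rp)$, $R=\mathrm{diag}(-1,r_2)$, $r_2\in\{\pm1\}$ (i.e. $X_H\circ\mathcal R=-\mathcal RX_H$), then $\widehat S^s(2\pi-q_1,r_2q_2)=-S^u(q_1,q_2)+\sigma$ for $(q_1,q_2)\in(\pi-a,\pi+a)\times(-\delta,\delta)$, and $S_0(2\pi-q_1)=-S_0(q_1)+\sigma$ and $S_1(2\pi-q_1)=-r_2S_1(q_1)$ for all $q_1\in\mathbb R$, and $\widehat T^s(2\pi-q_1)=-T^u(q_1)$ for $q_1\in(\pi-a,\pi+a)$.
   Context: Smooth means $C^r$, $r\ge2$, or analytic; $X_H$ is the Hamiltonian vector field for $dq\wedge dp$. The functions $S_0,S_1$ coincide with the coefficients of orders $0,1$ in $q_2$ of $S^u$ (and of $\widehat S^s$) on their domains. *)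

From Stdlib Require Import Reals ZArith.
From Coquelicot Require Import Coquelicot.
Open Scope R_scope.

(** Points of T*R^2 in covering coordinates: (q1,q2,p1,p2). *)
Record state := mkst { sq1 : R; sq2 : R; sp1 : R; sp2 : R }.

Definition pd1 (f : R -> R -> R) (x y : R) : R := Derive (fun t => f t y) x.
Definition pd2 (f : R -> R -> R) (x y : R) : R := Derive (fun t => f x t) y.

Definition uncurry2 (f : R -> R -> R) : R * R -> R := fun z => f (fst z) (snd z).

Definition C1_on (D : R -> R -> Prop) (f : R -> R -> R) : Prop :=
  forall x y, D x y ->
    ex_derive (fun t => f t y) x /\ ex_derive (fun t => f x t) y /\
    continuous (uncurry2 f) (x, y) /\
    continuous (uncurry2 (pd1 f)) (x, y) /\
    continuous (uncurry2 (pd2 f)) (x, y).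

Definition C2_on (D : R -> R -> Prop) (f : R -> R -> R) : Prop :=
  C1_on D f /\ C1_on D (pd1 f) /\ C1_on D (pd2 f).

Definition whole_plane : R -> R -> Prop := fun _ _ => True.

Definition periodic2 (f : R -> R -> R) : Prop :=
  forall x y, f (x + 2 * PI) y = f x y /\ f x (y + 2 * PI) = f x y.

Definition Ham (b11 b12 b22 V : R -> R -> R) (q1 q2 p1 p2 : R) : R :=
  / 2 * (b11 q1 q2 * p1 ^ 2 + 2 * b12 q1 q2 * p1 * p2 + b22 q1 q2 * p2 ^ 2)
  + V q1 q2.

Definition XH (H : R -> R -> R -> R -> R) (z : state) : state :=
  let '(mkst q1 q2 p1 p2) := z in
  mkst (Derive (fun s => H q1 q2 s p2) p1)
       (Derive (fun s => H q1 q2 p1 s) p2)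
       (- Derive (fun s => H s q2 p1 p2) q1)
       (- Derive (fun s => H q1 s p1 p2) q2).

(** The involution calR(q,p) = (Rq, -Rp), R = diag(-1, r2); it is linear,
    so it acts the same way on points and on vectors. *)
Definition calR (r2 : R) (z : state) : state :=
  mkst (- sq1 z) (r2 * sq2 z) (sp1 z) (- (r2 * sp2 z)).

Definition opp_state (z : state) : state :=
  mkst (- sq1 z) (- sq2 z) (- sp1 z) (- sp2 z).

Definition is_solution (H : R -> R -> R -> R -> R) (x : R -> state) : Prop :=
  forall t,
    is_derive (fun s => sq1 (x s)) t (sq1 (XH H (x t))) /\
    is_derive (fun s => sq2 (x s)) t (sq2 (XH H (x t))) /\
    is_derive (fun s => sp1 (x s)) t (sp1 (XH H (x t))) /\
    is_derive (fun s => sp2 (x s)) t (sp2 (XH H (x t))).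

Definition tends_to (x : R -> state) (l : Rbar) (w : state) : Prop :=
  is_lim (fun t => sq1 (x t)) l (sq1 w) /\
  is_lim (fun t => sq2 (x t)) l (sq2 w) /\
  is_lim (fun t => sp1 (x t)) l (sp1 w) /\
  is_lim (fun t => sp2 (x t)) l (sp2 w).

Definition origin : state := mkst 0 0 0 0.

Definition Wu (H : R -> R -> R -> R -> R) (w z : state) : Prop :=
  exists x : R -> state, is_solution H x /\ x 0 = z /\ tends_to x m_infty w.
Definition Ws (H : R -> R -> R -> R -> R) (w z : state) : Prop :=
  exists x : R -> state, is_solution H x /\ x 0 = z /\ tends_to x p_infty w.

Definition is_graph_over (W : state -> Prop) (D : R -> R -> Prop)
    (S : R -> R -> R) : Prop :=
  forall z, D (sq1 z) (sq2 z) ->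
    (W z <-> (sp1 z = pd1 S (sq1 z) (sq2 z) /\ sp2 z = pd2 S (sq1 z) (sq2 z))).

Definition box (a b c d : R) : R -> R -> Prop :=
  fun x y => a < x < b /\ c < y < d.

(** The 2*pi-antiperiodic extension (f(x + 2pi) = - f(x)) of a function given
    on (0, 2pi); at the points 2*pi*k we use the value 0 (the continuous
    extension, since P1, P2 tend to 0 at the endpoints). *)
Definition antiper_ext (f : R -> R) (x : R) : R :=
  let k := Int_part (x / (2 * PI)) in
  let y := x - 2 * PI * IZR k in
  if Req_EM_T y 0 then 0 else if Z.even k then f y else - f y.

From Stdlib Require Import Reals ZArith Lra.
From Coquelicot Require Import Coquelicot.
Open Scope R_scope.

(* Reversibility means that t |-> calR (x (-t)) solves Hamilton's equations whenever
   x does, so calR maps the unstable manifold of the fixed point O into its stable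
   manifold.  Over the graph domains this identifies grad S^s (-q1, r2 q2) with the
   reflection of grad S^u (q1, q2); integrating from the origin, where both generating
   functions vanish, gives S^s (-q1, r2 q2) = - S^u (q1, q2), which is the first
   identity after the translation by 2 pi, and differentiating twice in q2 gives the
   one for T^u.  Along the homoclinic orbit p = grad S^u on the first half and
   p = grad S^s (q1 - 2 pi) on the second half, so the same identity yields
   P1 (2 pi - q1) = P1 q1 and P2 (2 pi - q1) = - r2 P2 q1.  These symmetries pass to
   the antiperiodic extensions, and to the primitive S0 by the substitution
   q1 |-> 2 pi - q1. *)

Lemma two_PI_pos : 0 < 2 * PI.
Proof. pose proof PI_RGT_0; lra. Qed.

Lemma sign_sq (r : R) : r = 1 \/ r = -1 -> r * r = 1.
Proof. now intros [-> | ->]; ring. Qed.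

Lemma sign_mult_bound (r d y : R) :
  r = 1 \/ r = -1 -> - d < y < d -> - d < r * y < d.
Proof. intros [-> | ->] Hy; lra. Qed.

Lemma is_derive_comp_scal (f : R -> R) (k t l : R) :
  is_derive f (k * t) l -> is_derive (fun s => f (k * s)) t (k * l).
Proof.
intros Hf. apply (is_derive_comp f (fun s => k * s)); [exact Hf|].
auto_derive; [easy | ring].
Qed.

Lemma is_derive_comp_opp (f : R -> R) (t l : R) :
  is_derive f (- t) l -> is_derive (fun s => f (- s)) t (- l).
Proof.
intros Hf. replace (- l) with (-1 * l) by ring.
apply (is_derive_comp f Ropp); [exact Hf|].
auto_derive; [easy | ring].
Qed.

Lemma is_derive_comp_shift (f : R -> R) (c t l : R) :
  is_derive f (t + c) l -> is_derive (fun s => f (s + c)) t l.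
Proof.
intros Hf. rewrite <- (Rmult_1_l l).
apply (is_derive_comp f (fun s => s + c)); [exact Hf|].
auto_derive; [easy | ring].
Qed.

Lemma Derive_comp_shift (f : R -> R) (c x : R) :
  Derive (fun s => f (s + c)) x = Derive f (x + c).
Proof.
unfold Derive. f_equal. apply Lim_ext. intros h.
now replace (x + h + c) with (x + c + h) by ring.
Qed.

Lemma Derive_plus_const (f : R -> R) (c x : R) :
  Derive (fun s => f s + c) x = Derive f x.
Proof.
unfold Derive. f_equal. apply Lim_ext. intros h. f_equal. ring.
Qed.

Lemma pd2_pd2_translate (f : R -> R -> R) (c s x y : R) :
  pd2 (pd2 (fun u v => f (u - c) v + s)) x y = pd2 (pd2 f) (x - c) y.
Proof.
unfold pd2 at 1 3. apply Derive_ext. intros t.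
unfold pd2. apply (Derive_plus_const (fun v => f (x - c) v)).
Qed.

Lemma is_lim_comp_shift (g : R -> R) (l L : Rbar) (c : R) :
  l = m_infty \/ l = p_infty -> is_lim g l L -> is_lim (fun s => g (s + c)) l L.
Proof.
intros Hl Hg. apply (is_lim_comp g (fun s => s + c) l L l); [exact Hg | |].
- destruct Hl as [-> | ->]; intros P [M HM]; exists (M - c); intros x Hx; apply HM; lra.
- destruct Hl as [-> | ->]; exists 0; intros; discriminate.
Qed.

Lemma is_lim_comp_opp (g : R -> R) (L : Rbar) :
  is_lim g m_infty L -> is_lim (fun s => g (- s)) p_infty L.
Proof.
intros Hg. apply (is_lim_comp g Ropp p_infty L m_infty); [exact Hg | |].
- intros P [M HM]. exists (- M). intros x Hx. apply HM. lra.
- exists 0; intros; discriminate.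
Qed.

Lemma derive_zero_const_interval (g : R -> R) (lo hi u v : R) :
  (forall t, lo < t < hi -> is_derive g t 0) ->
  lo < u < hi -> lo < v < hi -> g u = g v.
Proof.
intros Hd Hu Hv.
assert (Hbounds : forall t, Rmin v u <= t <= Rmax v u -> lo < t < hi).
{ intros t [Ht1 Ht2]. split.
  - apply Rlt_le_trans with (Rmin v u); [apply Rmin_glb_lt|]; lra.
  - apply Rle_lt_trans with (Rmax v u); [|apply Rmax_lub_lt]; lra. }
destruct (MVT_gen g v u (fun _ => 0)) as (c & _ & Hc).
- intros t Ht. apply Hd, Hbounds. lra.
- intros t Ht. apply continuity_pt_filterlim.
  apply (@ex_derive_continuous R_AbsRing R_NormedModule).
  exists 0. apply Hd, Hbounds, Ht.
- lra.
Qed.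

Lemma derive_zero_const_rectangle (G : R -> R -> R) (a b c d x y : R) :
  a < 0 < b -> c < 0 < d ->
  (forall x y, box a b c d x y ->
     is_derive (fun t => G t y) x 0 /\ is_derive (fun t => G x t) y 0) ->
  box a b c d x y -> G x y = G 0 0.
Proof.
intros Hab Hcd Hd [Hx Hy].
rewrite (derive_zero_const_interval (fun t => G x t) c d y 0); [| | easy | lra].
- apply (derive_zero_const_interval (fun t => G t 0) a b); [| easy | lra].
  intros t Ht. apply (Hd t 0). split; lra.
- intros t Ht. apply (Hd x t). split; lra.
Qed.

Lemma increasing_between_limits (q : R -> R) (lo hi : R) :
  (forall t s, t < s -> q t < q s) ->
  is_lim q m_infty lo -> is_lim q p_infty hi -> forall t, lo < q t < hi.
Proof.
intros Hinc Hlo Hhi t.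
assert (Hge : forall s, lo <= q s).
{ intros s. apply (is_lim_le_loc q (fun _ => q s) m_infty lo (q s)); [| easy | apply is_lim_const].
  exists s. intros u Hu. apply Rlt_le, Hinc, Hu. }
assert (Hle : forall s, q s <= hi).
{ intros s. apply (is_lim_le_loc (fun _ => q s) q p_infty (q s) hi); [| apply is_lim_const | easy].
  exists s. intros u Hu. apply Rlt_le, Hinc, Hu. }
specialize (Hge (t - 1)). specialize (Hle (t + 1)).
assert (q (t - 1) < q t) by (apply Hinc; lra).
assert (q t < q (t + 1)) by (apply Hinc; lra).
lra.
Qed.

Lemma continuous_onto_between_limits (q : R -> R) (lo hi c : R) :
  (forall t, continuous q t) ->
  is_lim q m_infty lo -> is_lim q p_infty hi -> lo < c < hi -> exists t, q t = c.
Proof.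
intros Hc Hlo Hhi Hcb.
apply is_lim_spec in Hlo. apply is_lim_spec in Hhi.
destruct (Hlo (mkposreal (c - lo) ltac:(lra))) as (M1 & HM1).
destruct (Hhi (mkposreal (hi - c) ltac:(lra))) as (M2 & HM2).
specialize (HM1 (M1 - 1) ltac:(lra)). specialize (HM2 (M2 + 1) ltac:(lra)).
simpl in HM1, HM2. apply Rabs_def2 in HM1. apply Rabs_def2 in HM2.
destruct (IVT_gen q (M1 - 1) (M2 + 1) c) as (t & _ & Ht).
- intros x. apply continuity_pt_filterlim, Hc.
- split; [apply Rle_trans with (q (M1 - 1)); [apply Rmin_l | lra]
         |apply Rle_trans with (q (M2 + 1)); [lra | apply Rmax_r]].
- now exists t.
Qed.

Lemma RInt_reflect (f : R -> R) (c x : R) :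
  (forall y, continuous f y) -> (forall y, f (c - y) = f y) ->
  RInt f 0 (c - x) = - RInt f 0 x + RInt f 0 c.
Proof.
intros Hc Hs.
assert (Hex : forall u v, @ex_RInt R_CompleteNormedModule f u v)
  by (intros; apply (@ex_RInt_continuous R_CompleteNormedModule); intros; apply Hc).
assert (Hopp : @RInt R_CompleteNormedModule (fun y => - f y) x c
               = - @RInt R_CompleteNormedModule f x c)
  by apply (@RInt_opp R_CompleteNormedModule), Hex.
(* the substitution y = c - s maps [x, c] onto [c - x, 0] *)
pose proof (RInt_comp_lin f (-1) c x c (Hex _ _)) as Hsub.
replace (-1 * x + c) with (c - x) in Hsub by ring.
replace (-1 * c + c) with 0 in Hsub by ring.
rewrite (RInt_ext _ (fun y => - f y)), Hopp in Hsub.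
2:{ intros y _. rewrite <- (Hs y). unfold scal; simpl; unfold mult; simpl.
    replace (-1 * y + c) with (c - y) by ring. ring. }
rewrite <- (opp_RInt_swap f 0 (c - x) (Hex _ _)) in Hsub.
pose proof (RInt_Chasles f 0 x c (Hex _ _) (Hex _ _)) as Hch.
unfold plus, opp in *; simpl in *. lra.
Qed.

Lemma continuous_partial_map1 (F : R -> R -> R) (x y : R) :
  continuous (uncurry2 F) (x, y) -> continuous (fun t => F t y) x.
Proof.
intros Hc. apply (continuous_comp_2 (fun t : R => t) (fun _ : R => y) F x);
  [apply continuous_id | apply continuous_const | exact Hc].
Qed.

(** * The antiperiodic extension *)

Lemma period_decomposition (x : R) :
  exists (n : Z) (u : R), 0 <= u < 2 * PI /\ x = u + 2 * PI * IZR n.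
Proof.
pose proof two_PI_pos.
set (r := x / (2 * PI)).
exists (Int_part r), (x - 2 * PI * IZR (Int_part r)). split; [|ring].
destruct (base_Int_part r) as [B1 B2].
replace x with (2 * PI * r) by (unfold r; field; lra).
split; nra.
Qed.

Lemma Int_part_period (n : Z) (u : R) :
  0 <= u < 2 * PI -> Int_part ((u + 2 * PI * IZR n) / (2 * PI)) = n.
Proof.
intros Hu. pose proof two_PI_pos.
replace ((u + 2 * PI * IZR n) / (2 * PI)) with (u / (2 * PI) + IZR n) by (field; lra).
symmetry. apply Int_part_spec.
assert (0 <= u / (2 * PI) < 1).
{ split; [apply Rdiv_le_0_compat; lra|].
  apply Rmult_lt_reg_r with (2 * PI); [lra|]. field_simplify; lra. }
lra.
Qed.

Lemma antiper_ext_period_0 (g : R -> R) (n : Z) :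
  antiper_ext g (2 * PI * IZR n) = 0.
Proof.
unfold antiper_ext. rewrite <- (Rplus_0_l (2 * PI * IZR n)), Int_part_period.
- now destruct Req_EM_T as [|Hne]; [|contradict Hne; ring].
- pose proof two_PI_pos; lra.
Qed.

Lemma antiper_ext_period (g : R -> R) (n : Z) (u : R) :
  0 < u < 2 * PI ->
  antiper_ext g (u + 2 * PI * IZR n) = (if Z.even n then 1 else -1) * g u.
Proof.
intros Hu. unfold antiper_ext. rewrite Int_part_period by lra.
replace (u + 2 * PI * IZR n - 2 * PI * IZR n) with u by ring.
destruct Req_EM_T; [lra|]. destruct (Z.even n); ring.
Qed.

Lemma antiper_ext_in (g : R -> R) (u : R) : 0 < u < 2 * PI -> antiper_ext g u = g u.
Proof.
intros Hu. pose proof (antiper_ext_period g 0 u Hu) as E.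
rewrite Rmult_0_r, Rplus_0_r, Rmult_1_l in E. exact E.
Qed.

Lemma antiper_ext_0 (g : R -> R) : antiper_ext g 0 = 0.
Proof. pose proof (antiper_ext_period_0 g 0) as E. now rewrite Rmult_0_r in E. Qed.

Lemma antiper_ext_shift (g : R -> R) (n : Z) (x : R) :
  antiper_ext g (x + 2 * PI * IZR n) = (if Z.even n then 1 else -1) * antiper_ext g x.
Proof.
destruct (period_decomposition x) as (m & u & [[Hu | <-] Hu2] & ->).
- replace (u + 2 * PI * IZR m + 2 * PI * IZR n) with (u + 2 * PI * IZR (m + n))
    by (rewrite plus_IZR; ring).
  rewrite !antiper_ext_period, Z.even_add by lra.
  destruct (Z.even m), (Z.even n); simpl; ring.
- replace (0 + 2 * PI * IZR m + 2 * PI * IZR n) with (2 * PI * IZR (m + n))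
    by (rewrite plus_IZR; ring).
  rewrite Rplus_0_l, !antiper_ext_period_0. ring.
Qed.

Lemma antiper_ext_reflect (g : R -> R) (c : R) :
  (forall u, 0 < u < 2 * PI -> g (2 * PI - u) = c * g u) ->
  forall x, antiper_ext g (2 * PI - x) = c * antiper_ext g x.
Proof.
intros Hg x. destruct (period_decomposition x) as (n & u & [[Hu | <-] Hu2] & ->).
- replace (2 * PI - (u + 2 * PI * IZR n)) with ((2 * PI - u) + 2 * PI * IZR (- n))
    by (rewrite opp_IZR; ring).
  rewrite !antiper_ext_period, Hg, Z.even_opp by lra.
  destruct (Z.even n); ring.
- replace (2 * PI - (0 + 2 * PI * IZR n)) with (2 * PI * IZR (1 - n))
    by (rewrite minus_IZR; ring).
  rewrite Rplus_0_l, !antiper_ext_period_0. ring.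
Qed.

Lemma antiper_ext_continuous_0 (g : R -> R) :
  (forall u, 0 < u < 2 * PI -> g (2 * PI - u) = g u) ->
  filterlim g (at_right 0) (locally 0) ->
  continuous (antiper_ext g) 0.
Proof.
intros Hsym Hlim. apply filterlim_locally. intros eps.
destruct (proj1 (filterlim_locally g 0) Hlim eps) as [d Hd].
pose proof two_PI_pos.
exists (mkposreal (Rmin d (2 * PI)) ltac:(apply Rmin_glb_lt; [apply cond_pos | lra])).
intros x Hx. change (Rabs (x - 0) < Rmin d (2 * PI)) in Hx.
change (Rabs (antiper_ext g x - antiper_ext g 0) < eps).
assert (Hxd : Rabs (x - 0) < d) by (eapply Rlt_le_trans; [exact Hx | apply Rmin_l]).
assert (Hx2 : Rabs x < 2 * PI)
  by (rewrite <- (Rminus_0_r x); eapply Rlt_le_trans; [exact Hx | apply Rmin_r]).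
rewrite antiper_ext_0, Rminus_0_r.
destruct (Rtotal_order x 0) as [Hneg | [-> | Hpos]].
- rewrite Rabs_left in Hx2 by lra.
  (* on (-2pi, 0), antiper_ext g x = - g (x + 2pi) = - g (- x) *)
  replace x with ((2 * PI - - x) + 2 * PI * IZR (-1)) by (simpl; ring).
  rewrite antiper_ext_period, Hsym by lra. simpl.
  replace (-1 * g (- x)) with (- (g (- x) - 0)) by ring. rewrite Rabs_Ropp.
  apply (Hd (- x)); [|lra]. change (Rabs (- x - 0) < d).
  now rewrite Rminus_0_r, Rabs_Ropp, <- (Rminus_0_r x).
- rewrite antiper_ext_0, Rabs_R0. apply cond_pos.
- rewrite Rabs_pos_eq in Hx2 by lra.
  rewrite antiper_ext_in by lra. rewrite <- (Rminus_0_r (g x)).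
  now apply (Hd x).
Qed.

Lemma antiper_ext_continuous (g : R -> R) :
  (forall u, 0 < u < 2 * PI -> continuous g u) ->
  (forall u, 0 < u < 2 * PI -> g (2 * PI - u) = g u) ->
  filterlim g (at_right 0) (locally 0) ->
  forall x, continuous (antiper_ext g) x.
Proof.
intros Hc Hsym Hlim.
assert (Hbase : forall u, 0 <= u < 2 * PI -> continuous (antiper_ext g) u).
{ intros u [[Hu | <-] Hu2]; [|now apply antiper_ext_continuous_0].
  apply (continuous_ext_loc _ g); [|apply Hc; lra].
  apply (locally_interval _ u 0 (2 * PI)); simpl; try lra.
  intros y Hy1 Hy2. symmetry. apply antiper_ext_in. lra. }
intros x. destruct (period_decomposition x) as (n & u & Hu & ->).
apply (continuous_ext
  (fun s => mult (if Z.even n then 1 else -1) (antiper_ext g (s - 2 * PI * IZR n)))).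
{ intros s. rewrite <- antiper_ext_shift. f_equal. ring. }
apply (@continuous_mult R_UniformSpace R_AbsRing); [apply continuous_const|].
apply (continuous_comp (fun s => s - 2 * PI * IZR n) (antiper_ext g)).
- apply (continuous_minus (fun s : R => s)); [apply continuous_id | apply continuous_const].
- replace (u + 2 * PI * IZR n - 2 * PI * IZR n) with u by ring. now apply Hbase.
Qed.

(** * Hamiltonian flows *)

Definition translate_q1 (c : R) (z : state) : state :=
  mkst (sq1 z + c) (sq2 z) (sp1 z) (sp2 z).

Lemma calR_origin (r2 : R) : calR r2 origin = origin.
Proof. unfold calR, origin; simpl. f_equal; ring. Qed.

Section HamiltonianFlow.

Variable H : R -> R -> R -> R -> R.

Lemma is_solution_shift_time (x : R -> state) (c : R) :
  is_solution H x -> is_solution H (fun s => x (s + c)).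
Proof.
intros Hx t. destruct (Hx (t + c)) as (D1 & D2 & D3 & D4).
split; [|split; [|split]]; apply (is_derive_comp_shift (fun s => _ (x s))); assumption.
Qed.

Lemma tends_to_shift_time (x : R -> state) (l : Rbar) (w : state) (c : R) :
  l = m_infty \/ l = p_infty -> tends_to x l w -> tends_to (fun s => x (s + c)) l w.
Proof.
intros Hl (L1 & L2 & L3 & L4).
split; [|split; [|split]]; apply (is_lim_comp_shift (fun s => _ (x s))); assumption.
Qed.

Lemma Wu_solution (x : R -> state) (w : state) (t : R) :
  is_solution H x -> tends_to x m_infty w -> Wu H w (x t).
Proof.
intros Hx Hl. exists (fun s => x (s + t)). split; [|split].
- now apply is_solution_shift_time.
- now rewrite Rplus_0_l.
- now apply tends_to_shift_time; [left|].
Qed.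

Lemma Ws_solution (x : R -> state) (w : state) (t : R) :
  is_solution H x -> tends_to x p_infty w -> Ws H w (x t).
Proof.
intros Hx Hl. exists (fun s => x (s + t)). split; [|split].
- now apply is_solution_shift_time.
- now rewrite Rplus_0_l.
- now apply tends_to_shift_time; [right|].
Qed.

Section Translation.

Variable c : R.
Hypothesis H_translate : forall q1 q2 p1 p2, H (q1 + c) q2 p1 p2 = H q1 q2 p1 p2.

Lemma XH_translate_q1 (z : state) : XH H (translate_q1 c z) = XH H z.
Proof.
destruct z as [q1 q2 p1 p2]; unfold translate_q1, XH; simpl.
rewrite <- Derive_comp_shift.
f_equal; [| | f_equal | f_equal]; apply Derive_ext; intros; apply H_translate.
Qed.

Lemma is_solution_translate_q1 (x : R -> state) :
  is_solution H x -> is_solution H (fun s => translate_q1 c (x s)).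
Proof.
intros Hx t. rewrite XH_translate_q1. destruct (Hx t) as (D1 & D2 & D3 & D4).
split; [|split; [|split]]; try assumption.
pose proof (is_derive_plus _ _ t _ _ D1 (@is_derive_const R_AbsRing R_NormedModule c t)) as D.
now rewrite plus_zero_r in D.
Qed.

End Translation.

Lemma tends_to_translate_q1 (x : R -> state) (l : Rbar) (w : state) (c : R) :
  tends_to x l w -> tends_to (fun s => translate_q1 c (x s)) l (translate_q1 c w).
Proof.
intros (L1 & L2 & L3 & L4). split; [|split; [|split]]; try assumption.
apply (is_lim_plus _ (fun _ => c) l (sq1 w) c); [exact L1 | apply is_lim_const | easy].
Qed.

Section Reversibility.

Variable r2 : R.
Hypothesis H_reversible : forall z, XH H (calR r2 z) = opp_state (calR r2 (XH H z)).

Lemma is_solution_reverse (x : R -> state) :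
  is_solution H x -> is_solution H (fun t => calR r2 (x (- t))).
Proof.
intros Hx t. rewrite H_reversible. destruct (Hx (- t)) as (D1 & D2 & D3 & D4).
apply (is_derive_comp_opp (fun s => _ (x s))) in D1, D2, D3, D4.
simpl. split; [|split; [|split]].
- exact (is_derive_opp _ _ _ D1).
- replace (- (r2 * sq2 (XH H (x (- t))))) with (r2 * - sq2 (XH H (x (- t)))) by ring.
  exact (is_derive_scal _ _ r2 _ D2).
- exact D3.
- replace (- - (r2 * sp2 (XH H (x (- t))))) with (- (r2 * - sp2 (XH H (x (- t))))) by ring.
  exact (is_derive_opp _ _ _ (is_derive_scal _ _ r2 _ D4)).
Qed.

Lemma Wu_calR_Ws (z : state) : Wu H origin z -> Ws H origin (calR r2 z).
Proof.
intros (x & Hx & Hx0 & L1 & L2 & L3 & L4).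
exists (fun t => calR r2 (x (- t))). split; [|split].
- now apply is_solution_reverse.
- now rewrite Ropp_0, Hx0.
- apply is_lim_comp_opp in L1, L2, L3, L4. rewrite <- (calR_origin r2). simpl in *.
  split; [|split; [|split]].
  + now apply (is_lim_opp _ p_infty 0).
  + now apply (is_lim_scal_l _ r2 p_infty 0).
  + exact L3.
  + now apply (is_lim_opp _ p_infty (r2 * 0)), (is_lim_scal_l _ r2 p_infty 0).
Qed.

End Reversibility.

End HamiltonianFlow.

(** * Reflected generating functions *)

Section ReflectedGeneratingFunctions.

Variables (Wu Ws : state -> Prop) (Su Ss : R -> R -> R) (a delta r2 : R).
Hypothesis Ha : 0 < a.
Hypothesis Hdelta : 0 < delta.
Hypothesis Hr2 : r2 = 1 \/ r2 = -1.
Hypothesis HWu_Ws : forall z, Wu z -> Ws (calR r2 z).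
Hypothesis HSu_graph : is_graph_over Wu (box (- a) (PI + a) (- delta) delta) Su.
Hypothesis HSs_graph : is_graph_over Ws (box (- PI - a) a (- delta) delta) Ss.

Lemma box_reflect (x y : R) :
  box (- a) (PI + a) (- delta) delta x y -> box (- PI - a) a (- delta) delta (- x) (r2 * y).
Proof. intros [Hx Hy]. split; [lra | now apply sign_mult_bound]. Qed.

Lemma grad_Ss_reflect (x y : R) :
  box (- a) (PI + a) (- delta) delta x y ->
  pd1 Ss (- x) (r2 * y) = pd1 Su x y /\ pd2 Ss (- x) (r2 * y) = - (r2 * pd2 Su x y).
Proof.
intros Hxy.
set (z := mkst x y (pd1 Su x y) (pd2 Su x y)).
assert (Hz : Wu z) by now apply (HSu_graph z).
apply HWu_Ws, HSs_graph in Hz; [|now apply box_reflect].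
simpl in Hz. destruct Hz as [E1 E2]. split; [easy | lra].
Qed.

Hypothesis HSu : C1_on (box (- a) (PI + a) (- delta) delta) Su.
Hypothesis HSs : C1_on (box (- PI - a) a (- delta) delta) Ss.
Hypothesis HSu0 : Su 0 0 = 0.
Hypothesis HSs0 : Ss 0 0 = 0.

Lemma Ss_reflect (x y : R) :
  box (- a) (PI + a) (- delta) delta x y -> Ss (- x) (r2 * y) = - Su x y.
Proof.
intros Hxy.
(* Ss (- x) (r2 * y) + Su x y has zero gradient on the box and vanishes at the origin *)
enough (E : Ss (- x) (r2 * y) + Su x y = Ss (- 0) (r2 * 0) + Su 0 0)
  by (rewrite Ropp_0, Rmult_0_r, HSs0, HSu0 in E; lra).
apply (derive_zero_const_rectangle (fun u v => Ss (- u) (r2 * v) + Su u v)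
         (- a) (PI + a) (- delta) delta); [pose proof PI_RGT_0; lra | lra | | exact Hxy].
clear x y Hxy. intros x y Hxy.
destruct (grad_Ss_reflect x y Hxy) as [G1 G2].
destruct (HSs _ _ (box_reflect x y Hxy)) as (Ds1 & Ds2 & _).
destruct (HSu _ _ Hxy) as (Du1 & Du2 & _).
apply Derive_correct in Ds1, Ds2, Du1, Du2.
split.
- replace 0 with (- pd1 Ss (- x) (r2 * y) + pd1 Su x y) by lra.
  apply (is_derive_plus (fun t => Ss (- t) (r2 * y))); [|exact Du1].
  now apply (is_derive_comp_opp (fun t => Ss t (r2 * y))).
- replace 0 with (r2 * pd2 Ss (- x) (r2 * y) + pd2 Su x y)
    by (rewrite G2; pose proof (sign_sq r2 Hr2); nra).
  apply (is_derive_plus (fun t => Ss (- x) (r2 * t))); [|exact Du2].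
  now apply (is_derive_comp_scal (fun t => Ss (- x) t)).
Qed.

Hypothesis HSu_pd2 : C1_on (box (- a) (PI + a) (- delta) delta) (pd2 Su).

Lemma pd2_pd2_Ss_reflect (x : R) :
  - a < x < PI + a -> pd2 (pd2 Ss) (- x) 0 = - pd2 (pd2 Su) x 0.
Proof.
intros Hx. pose proof (sign_sq r2 Hr2) as Hsq.
unfold pd2 at 1.
rewrite (Derive_ext_loc _ (fun t => - (r2 * pd2 Su x (r2 * t)))).
- apply is_derive_unique.
  replace (- pd2 (pd2 Su) x 0) with (- (r2 * (r2 * pd2 (pd2 Su) x (r2 * 0))))
    by (rewrite Rmult_0_r; nra).
  apply (is_derive_opp (fun t => r2 * pd2 Su x (r2 * t))), is_derive_scal.
  apply (is_derive_comp_scal (fun t => pd2 Su x t)), Derive_correct.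
  apply (HSu_pd2 x (r2 * 0)). rewrite Rmult_0_r. split; lra.
- apply (locally_interval _ 0 (- delta) delta); simpl; try lra.
  intros t Ht1 Ht2.
  assert (Hbox : box (- a) (PI + a) (- delta) delta x (r2 * t))
    by (split; [lra | now apply sign_mult_bound]).
  destruct (grad_Ss_reflect x (r2 * t) Hbox) as [_ G2].
  now replace (r2 * (r2 * t)) with t in G2 by nra.
Qed.

End ReflectedGeneratingFunctions.

(** * The homoclinic orbit *)

Section HomoclinicOrbit.

Variables (H : R -> R -> R -> R -> R) (gamma : R -> state) (P1 P2 : R -> R).
Hypothesis H_translate : forall q1 q2 p1 p2, H (q1 + - (2 * PI)) q2 p1 p2 = H q1 q2 p1 p2.
Hypothesis Hgamma_sol : is_solution H gamma.
Hypothesis Hgamma_q2 : forall t, sq2 (gamma t) = 0.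
Hypothesis Hgamma_incr : forall t s, t < s -> sq1 (gamma t) < sq1 (gamma s).
Hypothesis Hgamma_past : tends_to gamma m_infty origin.
Hypothesis Hgamma_future : tends_to gamma p_infty (mkst (2 * PI) 0 0 0).
Hypothesis Hgamma_P : forall t, sp1 (gamma t) = P1 (sq1 (gamma t)) /\
                                sp2 (gamma t) = P2 (sq1 (gamma t)).

Lemma orbit_q1_bounds (t : R) : 0 < sq1 (gamma t) < 2 * PI.
Proof.
apply (increasing_between_limits (fun s => sq1 (gamma s))); [exact Hgamma_incr | |].
- exact (proj1 Hgamma_past).
- exact (proj1 Hgamma_future).
Qed.

Lemma orbit_q1_onto (c : R) : 0 < c < 2 * PI -> exists t, sq1 (gamma t) = c.
Proof.
apply (continuous_onto_between_limits (fun s => sq1 (gamma s))).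
- intros t. apply (@ex_derive_continuous R_AbsRing R_NormedModule).
  eexists. apply Hgamma_sol.
- exact (proj1 Hgamma_past).
- exact (proj1 Hgamma_future).
Qed.

Variables (Su Ss : R -> R -> R) (a delta : R).
Hypothesis Ha : 0 < a.
Hypothesis Hdelta : 0 < delta.
Hypothesis HSu_graph : is_graph_over (Wu H origin) (box (- a) (PI + a) (- delta) delta) Su.
Hypothesis HSs_graph : is_graph_over (Ws H origin) (box (- PI - a) a (- delta) delta) Ss.

Lemma P_grad_Su (x : R) :
  0 < x < 2 * PI -> x < PI + a -> P1 x = pd1 Su x 0 /\ P2 x = pd2 Su x 0.
Proof.
intros Hx Hxa. destruct (orbit_q1_onto x Hx) as (t & Ht).
assert (Hbox : box (- a) (PI + a) (- delta) delta (sq1 (gamma t)) (sq2 (gamma t)))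
  by (rewrite Ht, Hgamma_q2; split; lra).
apply HSu_graph in Hbox.
destruct (proj1 Hbox (Wu_solution H gamma origin t Hgamma_sol Hgamma_past)) as [E1 E2].
destruct (Hgamma_P t) as [F1 F2].
rewrite Ht, Hgamma_q2 in *. split; congruence.
Qed.

Lemma P_grad_Ss (x : R) :
  0 < x < 2 * PI -> PI - a < x -> P1 x = pd1 Ss (x - 2 * PI) 0 /\ P2 x = pd2 Ss (x - 2 * PI) 0.
Proof.
intros Hx Hxa. destruct (orbit_q1_onto x Hx) as (t & Ht).
set (x' := fun s => translate_q1 (- (2 * PI)) (gamma s)).
assert (Hsol : is_solution H x')
  by now apply (is_solution_translate_q1 H (- (2 * PI))).
assert (Hlim : tends_to x' p_infty origin).
{ unfold origin. replace 0 with (2 * PI + - (2 * PI)) at 1 by ring.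
  now apply (tends_to_translate_q1 gamma p_infty (mkst (2 * PI) 0 0 0)). }
assert (Hbox : box (- PI - a) a (- delta) delta (sq1 (x' t)) (sq2 (x' t)))
  by (simpl; rewrite Ht, Hgamma_q2; split; lra).
apply HSs_graph in Hbox.
destruct (proj1 Hbox (Ws_solution H x' origin t Hsol Hlim)) as [E1 E2].
destruct (Hgamma_P t) as [F1 F2].
simpl in E1, E2. rewrite Ht, Hgamma_q2 in *. unfold Rminus. split; congruence.
Qed.

Variable r2 : R.
Hypothesis Hr2 : r2 = 1 \/ r2 = -1.
Hypothesis Hgrad_reflect : forall x, - a < x < PI + a ->
  pd1 Ss (- x) 0 = pd1 Su x 0 /\ pd2 Ss (- x) 0 = - (r2 * pd2 Su x 0).

Lemma P_reflect (u : R) :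
  0 < u < 2 * PI -> P1 (2 * PI - u) = P1 u /\ P2 (2 * PI - u) = - r2 * P2 u.
Proof.
pose proof (sign_sq r2 Hr2) as Hsq.
assert (Hhalf : forall v, 0 < v < 2 * PI -> PI - a < v ->
                P1 v = P1 (2 * PI - v) /\ P2 v = - r2 * P2 (2 * PI - v)).
{ intros v Hv Hva.
  destruct (P_grad_Ss v Hv Hva) as [E1 E2].
  destruct (P_grad_Su (2 * PI - v)) as [F1 F2]; [lra | lra |].
  destruct (Hgrad_reflect (2 * PI - v)) as [G1 G2]; [lra |].
  replace (- (2 * PI - v)) with (v - 2 * PI) in G1, G2 by ring.
  rewrite E1, E2, F1, F2, G1, G2. split; ring. }
intros Hu. destruct (Rlt_dec (PI - a) u) as [Hua | Hua].
- destruct (Hhalf u Hu Hua) as [E1 E2]. split; [easy|]. rewrite E2. nra.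
- destruct (Hhalf (2 * PI - u)) as [E1 E2]; [lra | lra |].
  replace (2 * PI - (2 * PI - u)) with u in E1, E2 by ring. easy.
Qed.

Hypothesis HSu : C1_on (box (- a) (PI + a) (- delta) delta) Su.

Lemma pd1_Su_continuous (x : R) : - a < x < PI + a -> continuous (fun t => pd1 Su t 0) x.
Proof.
intros Hx. destruct (HSu x 0) as (_ & _ & _ & Hc & _); [split; lra|].
now apply continuous_partial_map1.
Qed.

Lemma pd1_Su_origin : pd1 Su 0 0 = 0.
Proof.
pose proof PI_RGT_0.
destruct Hgamma_past as (L1 & _ & L3 & _). simpl in L1, L3.
assert (L : is_lim (fun t => pd1 Su (sq1 (gamma t)) 0) m_infty (pd1 Su 0 0)).
{ apply (is_lim_comp_continuous _ (fun t => pd1 Su t 0)); [exact L1|].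
  apply pd1_Su_continuous. lra. }
assert (L' : is_lim (fun t => pd1 Su (sq1 (gamma t)) 0) m_infty 0).
{ apply (is_lim_ext_loc (fun t => sp1 (gamma t))); [|exact L3].
  apply is_lim_spec in L1. destruct (L1 (mkposreal (PI + a) ltac:(lra))) as [M HM].
  exists M. intros t Ht. specialize (HM t Ht). simpl in HM.
  rewrite Rminus_0_r in HM. apply Rabs_def2 in HM.
  rewrite (proj1 (Hgamma_P t)). apply P_grad_Su; [apply orbit_q1_bounds | lra]. }
apply is_lim_unique in L, L'. rewrite L in L'. now injection L'.
Qed.

Lemma P1_continuous (x : R) : 0 < x < 2 * PI -> continuous P1 x.
Proof.
assert (Hleft : forall u, 0 < u < 2 * PI -> u < PI + a -> continuous P1 u).
{ clear x. intros x Hx Hxa. apply (continuous_ext_loc _ (fun t => pd1 Su t 0)).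
  - apply (locally_interval _ x 0 (Rmin (PI + a) (2 * PI))); simpl; try lra.
    + now apply Rmin_glb_lt.
    + intros y Hy1 Hy2. symmetry. apply P_grad_Su.
      * split; [lra | eapply Rlt_le_trans; [exact Hy2 | apply Rmin_r]].
      * eapply Rlt_le_trans; [exact Hy2 | apply Rmin_l].
  - apply pd1_Su_continuous. lra. }
intros Hx. destruct (Rlt_dec x (PI + a)) as [Hxa | Hxa]; [now apply Hleft|].
apply (continuous_ext_loc _ (fun u => P1 (2 * PI - u))).
- apply (locally_interval _ x 0 (2 * PI)); simpl; try lra.
  intros y Hy1 Hy2. apply P_reflect. lra.
- apply (continuous_comp (fun u => 2 * PI - u)).
  + apply (continuous_minus (fun _ : R => 2 * PI)); [apply continuous_const | apply continuous_id].
  + apply Hleft; lra.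
Qed.

Lemma P1_lim_right_0 : filterlim P1 (at_right 0) (locally 0).
Proof.
pose proof PI_RGT_0.
apply (filterlim_ext_loc (fun t => pd1 Su t 0)).
- exists (mkposreal (Rmin (PI + a) (2 * PI)) ltac:(apply Rmin_glb_lt; lra)).
  intros y Hy Hpos. change (Rabs (y - 0) < Rmin (PI + a) (2 * PI)) in Hy.
  rewrite Rminus_0_r, Rabs_pos_eq in Hy by lra.
  symmetry. apply P_grad_Su.
  + split; [lra | eapply Rlt_le_trans; [exact Hy | apply Rmin_r]].
  + eapply Rlt_le_trans; [exact Hy | apply Rmin_l].
- apply (filterlim_filter_le_1 _ (filter_le_within _)).
  rewrite <- pd1_Su_origin at 2. apply pd1_Su_continuous. lra.
Qed.

End HomoclinicOrbit.

Lemma periodic2_translate_back (f : R -> R -> R) (x y : R) :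
  periodic2 f -> f (x + - (2 * PI)) y = f x y.
Proof.
intros Hf. rewrite <- (proj1 (Hf (x + - (2 * PI)) y)). f_equal. ring.
Qed.

Lemma Ham_translate_q1 (b11 b12 b22 V : R -> R -> R) :
  periodic2 b11 -> periodic2 b12 -> periodic2 b22 -> periodic2 V ->
  forall q1 q2 p1 p2,
    Ham b11 b12 b22 V (q1 + - (2 * PI)) q2 p1 p2 = Ham b11 b12 b22 V q1 q2 p1 p2.
Proof.
intros P11 P12 P22 PV q1 q2 p1 p2. unfold Ham.
now rewrite !periodic2_translate_back.
Qed.

Theorem proposition6
  (b11 b12 b22 Vpot : R -> R -> R)
  (Hb11 : C2_on whole_plane b11) (Hb12 : C2_on whole_plane b12)
  (Hb22 : C2_on whole_plane b22) (HV : C2_on whole_plane Vpot)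
  (Pb11 : periodic2 b11) (Pb12 : periodic2 b12) (Pb22 : periodic2 b22)
  (PV : periodic2 Vpot)
  (Bpos : forall x y, 0 < b11 x y /\ 0 < b11 x y * b22 x y - b12 x y ^ 2)
  (Vmax : exists eps, 0 < eps /\
     forall x y, Rabs x < eps -> Rabs y < eps -> Vpot x y <= Vpot 0 0)
  (Vnondeg : pd1 (pd1 Vpot) 0 0 * pd2 (pd2 Vpot) 0 0 - pd2 (pd1 Vpot) 0 0 * pd1 (pd2 Vpot) 0 0 <> 0)
  (V0 : Vpot 0 0 = 0)
  (dB : forall x, pd2 b11 x 0 = 0 /\ pd2 b12 x 0 = 0 /\ pd2 b22 x 0 = 0)
  (P1 P2 : R -> R)
  (gamma : R -> state)
  (Hgsol : is_solution (Ham b11 b12 b22 Vpot) gamma)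
  (Hgq2 : forall t, sq2 (gamma t) = 0)
  (Hginc : forall t s, t < s -> sq1 (gamma t) < sq1 (gamma s))
  (Hgm : tends_to gamma m_infty origin)
  (Hgp : tends_to gamma p_infty (mkst (2 * PI) 0 0 0))
  (HgP : forall t, sp1 (gamma t) = P1 (sq1 (gamma t)) /\
                   sp2 (gamma t) = P2 (sq1 (gamma t)))
  (a delta : R) (Ha : 0 < a) (Hdelta : 0 < delta)
  (Su Ss : R -> R -> R)
  (HSu : C2_on (box (- a) (PI + a) (- delta) delta) Su)
  (HSs : C2_on (box (- PI - a) a (- delta) delta) Ss)
  (Hu : is_graph_over (Wu (Ham b11 b12 b22 Vpot) origin)
          (box (- a) (PI + a) (- delta) delta) Su)
  (Hs : is_graph_over (Ws (Ham b11 b12 b22 Vpot) origin)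
          (box (- PI - a) a (- delta) delta) Ss)
  (Su0 : Su 0 0 = 0) (Ss0 : Ss 0 0 = 0)
  (r2 : R) (Hr2 : r2 = 1 \/ r2 = -1)
  (Hrev : forall z, XH (Ham b11 b12 b22 Vpot) (calR r2 z)
                    = opp_state (calR r2 (XH (Ham b11 b12 b22 Vpot) z))) :
  let sigma := RInt P1 0 (2 * PI) in
  let Sshat := fun x y => Ss (x - 2 * PI) y + sigma in
  let S0' := antiper_ext P1 in
  let S0 := fun x => RInt S0' 0 x in
  let S1 := antiper_ext P2 in
  let Tu := fun x => pd2 (pd2 Su) x 0 in
  let Tshat := fun x => pd2 (pd2 Sshat) x 0 in
  (forall x y, PI - a < x < PI + a -> - delta < y < delta ->
     Sshat (2 * PI - x) (r2 * y) = - Su x y + sigma) /\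
  (forall x, S0 (2 * PI - x) = - S0 x + sigma) /\
  (forall x, S1 (2 * PI - x) = - r2 * S1 x) /\
  (forall x, PI - a < x < PI + a -> Tshat (2 * PI - x) = - Tu x).
Proof.
intros sigma Sshat S0' S0 S1 Tu Tshat.
pose proof PI_RGT_0.
destruct HSu as (HSu1 & _ & HSu2). destruct HSs as (HSs1 & _ & _).
pose proof (Wu_calR_Ws _ r2 Hrev) as HWu_Ws.
pose proof (Ham_translate_q1 _ _ _ _ Pb11 Pb12 Pb22 PV) as Hper.
assert (Hgrad : forall x, - a < x < PI + a ->
          pd1 Ss (- x) 0 = pd1 Su x 0 /\ pd2 Ss (- x) 0 = - (r2 * pd2 Su x 0)).
{ intros x Hx.
  assert (G : pd1 Ss (- x) (r2 * 0) = pd1 Su x 0 /\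
              pd2 Ss (- x) (r2 * 0) = - (r2 * pd2 Su x 0))
    by (eapply grad_Ss_reflect with (a := a) (delta := delta); try eassumption; split; lra).
  now rewrite Rmult_0_r in G. }
assert (HP : forall u, 0 < u < 2 * PI ->
          P1 (2 * PI - u) = P1 u /\ P2 (2 * PI - u) = - r2 * P2 u)
  by (intros; eapply (P_reflect _ gamma) with (a := a) (delta := delta); eassumption).
split; [|split; [|split]].
- intros x y Hx Hy. unfold Sshat. replace (2 * PI - x - 2 * PI) with (- x) by ring.
  erewrite Ss_reflect with (a := a) (delta := delta); try eassumption; [reflexivity | split; lra].
- intros x. unfold S0, sigma.
  rewrite (RInt_ext P1 S0') by (intros y Hy; symmetry; apply antiper_ext_in;
    rewrite Rmin_left, Rmax_right in Hy; lra).
  apply RInt_reflect.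
  + apply antiper_ext_continuous.
    * eapply (P1_continuous _ gamma) with (a := a) (delta := delta); eassumption.
    * intros u Hu'. apply HP, Hu'.
    * eapply (P1_lim_right_0 _ gamma) with (a := a) (delta := delta); eassumption.
  + intros y. unfold S0'. rewrite (antiper_ext_reflect P1 1); [ring|].
    intros u Hu'. rewrite Rmult_1_l. apply HP, Hu'.
- intros x. apply antiper_ext_reflect. intros u Hu'. apply HP, Hu'.
- intros x Hx. unfold Tshat, Tu, Sshat. rewrite pd2_pd2_translate.
  replace (2 * PI - x - 2 * PI) with (- x) by ring.
  eapply pd2_pd2_Ss_reflect with (a := a) (delta := delta); try eassumption. lra.
Qed.
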